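(* Assume $\mathrm{char}(\mathbb{F})=p>0$, let $0\neq h\in\mathbb{F}[x]$, and regard $A_h\subseteq A_1$ via $x\mapsto x$, $\hat y\mapsto yh$. Then $A_h$ is a free module over its center $Z(A_h)=\mathbb{F}[x^p,h^py^p]$, with basis $\{x^ih^jy^j: 0\le i,j<p\}$.
   Context: For $h\in\mathbb{F}[x]$, $A_h$ is the unital associative $\mathbb{F}$-algebra generated by $x,\hat y$ with defining relation $\hat yx-x\hat y=h$. $A_1$ is the Weyl algebra, generated by $x,y$ with $yx-xy=1$; for $h\ne0$, $x\mapsto x,\ \hat y\mapsto yh$ embeds $A_h$ into $A_1$, and for each $j\ge0$ the element $h^jy^j\in A_1$ lies in $A_h$. *)

From HB Require Import structures.
From mathcomp Require Import all_boot all_order all_algebra.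
Set Implicit Arguments. Unset Strict Implicit. Unset Printing Implicit Defensive.
Import GRing.Theory.
Local Open Scope ring_scope.

(* Concrete model of the Weyl algebra A_1 = F<x,y>/(yx - xy - 1).
   An element is stored in normal form  sum_j f_j(x) y^j  (x's to the left),
   as a polynomial in y (outer variable) with coefficients f_j in F[x]:
   the j-th coefficient of  a : {poly {poly F}}  is f_j. *)
Definition weyl (F : fieldType) := {poly {poly F}}.

(* Product of normal forms, using  y^i g = sum_k C(i,k) g^(k) y^(i-k):
   (f y^i)(g y^j) = sum_k C(i,k) f g^(k) y^(i-k+j). *)
Definition wmul (F : fieldType) (a b : {poly {poly F}}) : {poly {poly F}} :=
  \sum_(i < size a) \sum_(j < size b) \sum_(k < i.+1)
     ((a`_i * (b`_j)^`(k)) *+ 'C(i, k))%:P * 'X^(i - k + j).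

Definition wx (F : fieldType) : {poly {poly F}} := ('X : {poly F})%:P.
Definition wy (F : fieldType) : {poly {poly F}} := 'X.
Definition wpoly (F : fieldType) (f : {poly F}) : {poly {poly F}} := f%:P.

Inductive in_Ah (F : fieldType) (h : {poly F}) : {poly {poly F}} -> Prop :=
| Ah_scal (c : F) : in_Ah h (c%:P%:P)
| Ah_x : in_Ah h (wx F)
| Ah_yhat : in_Ah h (wmul (wy F) (wpoly h))
| Ah_add a b : in_Ah h a -> in_Ah h b -> in_Ah h (a + b)
| Ah_mul a b : in_Ah h a -> in_Ah h b -> in_Ah h (wmul a b).

Definition in_center (F : fieldType) (h : {poly F}) (z : {poly {poly F}}) : Prop :=
  in_Ah h z /\ forall a, in_Ah h a -> wmul z a = wmul a z.

Inductive in_Zgen (F : fieldType) (h : {poly F}) (p : nat) : {poly {poly F}} -> Prop :=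
| Zg_scal (c : F) : in_Zgen h p (c%:P%:P)
| Zg_xp : in_Zgen h p (wpoly ('X ^+ p))
| Zg_hyp : in_Zgen h p (wpoly (h ^+ p) * 'X^p)
| Zg_add a b : in_Zgen h p a -> in_Zgen h p b -> in_Zgen h p (a + b)
| Zg_mul a b : in_Zgen h p a -> in_Zgen h p b -> in_Zgen h p (wmul a b).

(* The basis element x^i h^j y^j of A_1 (already in normal form) *)
Definition wbasis (F : fieldType) (h : {poly F}) (i j : nat) : {poly {poly F}} :=
  wpoly ('X ^+ i * h ^+ j) * 'X^j.

From HB Require Import structures.
From mathcomp Require Import all_boot all_order all_algebra.
From mathcomp Require Import ring zify.
Import GRing.Theory.
Local Open Scope ring_scope.

Section PSparse.
Context {R : comNzRingType} (p : nat).

Definition p_sparse (q : {poly R}) := forall m, ~~ (p %| m)%N -> q`_m = 0.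

Lemma poly_expand {a : {poly R}} {n : nat} : (size a <= n)%N ->
  a = \sum_(i < n) (a`_i)%:P * 'X^i.
Proof.
move=> sa; under eq_bigr => i _ do rewrite mul_polyC.
rewrite -poly_def; apply/polyP => k; rewrite coef_poly.
by case: ltnP => // /(leq_trans sa) /leq_sizeP ->.
Qed.

Lemma mul_poly_expand {a b : {poly R}} {n m : nat} :
  (size a <= n)%N -> (size b <= m)%N ->
  a * b = \sum_(i < n) \sum_(j < m) (a`_i * b`_j)%:P * 'X^(i + j).
Proof.
move=> sa sb; rewrite {1}(poly_expand sa) {1}(poly_expand sb) mulr_suml.
apply: eq_bigr => i _; rewrite mulr_sumr; apply: eq_bigr => j _.
by rewrite polyCM exprD; ring.
Qed.

Hypothesis p_gt0 : (0 < p)%N.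

Lemma coef_psplit (Q : 'I_p -> {poly R}) n : (forall j, p_sparse (Q j)) ->
  (\sum_(j < p) 'X^j * Q j)`_n = (Q (Ordinal (ltn_pmod n p_gt0)))`_(n %/ p * p).
Proof.
move=> sQ; rewrite coef_sum (bigD1 (Ordinal (ltn_pmod n p_gt0))) //= big1 ?addr0.
  rewrite coefXnM ltnNge leq_mod /=; congr (_`_ _).
  by rewrite {1}(divn_eq n p) addnK.
move=> j /eqP nj; rewrite coefXnM; case: ltnP => // jn.
apply: sQ; apply/negP => pd; apply: nj; apply: val_inj => /=.
by move: pd; rewrite -eqn_mod_dvd // => /eqP ->; rewrite modn_small.
Qed.

Lemma psplit_uniq (Q : 'I_p -> {poly R}) : (forall j, p_sparse (Q j)) ->
  \sum_(j < p) 'X^j * Q j = 0 -> forall j, Q j = 0.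
Proof.
move=> sQ Q0 j; apply/polyP => m; rewrite coef0.
case pm: (p %| m)%N; last by apply: sQ; rewrite pm.
have := congr1 (fun q : {poly R} => q`_(m + j)) Q0.
rewrite coef0 coef_psplit //.
have -> : ((m + j) %/ p * p)%N = m.
  by rewrite divnDl // (divn_small (ltn_ord j)) addn0 divnK.
suff -> : Ordinal (ltn_pmod (m + j) p_gt0) = j by [].
by apply: val_inj => /=; rewrite -(divnK pm) modnMDl modn_small.
Qed.

Definition psection (i : nat) (q : {poly R}) :=
  \poly_(m < size q) (if (p %| m)%N then q`_(m + i) else 0).

Lemma psection_sparse i q : p_sparse (psection i q).
Proof. by move=> m /negbTE pm; rewrite coef_poly pm; case: ifP. Qed.

Lemma psplit q : q = \sum_(i < p) 'X^i * psection i q.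
Proof.
apply/polyP => n; rewrite coef_psplit; last by move=> j; apply: psection_sparse.
rewrite coef_poly /= dvdn_mull // -divn_eq.
by case: ltnP => // lt_sz; apply/leq_sizeP: (leq_trans lt_sz (leq_divM n p)).
Qed.

End PSparse.
Arguments coef_psplit {R p} p_gt0 Q n.
Arguments psplit_uniq {R p} p_gt0 Q.
Arguments psplit {R p} p_gt0 q.
Arguments psection_sparse {R p} i q.

Lemma mulrn_pchar_dvd {R : nzRingType} {p : nat} (charRp : p \in [pchar R])
  {x : R} {n : nat} : (p %| n)%N -> x *+ n = 0.
Proof.
move=> pn; rewrite -mulr_natr.
have /eqP n0 : n%:R == 0 :> R by rewrite -(dvdn_pcharf charRp).
by rewrite n0 mulr0.
Qed.

Lemma mulrn_pchar_reg {R : idomainType} {p : nat} (charRp : p \in [pchar R])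
  {x : R} {n : nat} : ~~ (p %| n)%N -> x *+ n = 0 -> x = 0.
Proof.
move=> pn; rewrite -mulr_natr => /eqP; rewrite mulf_eq0.
by rewrite -(dvdn_pcharf charRp) (negbTE pn) orbF => /eqP.
Qed.

Lemma deriv0_sparse {R : idomainType} {p : nat} (charRp : p \in [pchar R])
  {q : {poly R}} : q^`() = 0 -> p_sparse p q.
Proof.
move=> dq [|m] pm; first by rewrite dvdn0 in pm.
have := congr1 (fun r : {poly R} => r`_m) dq; rewrite coef_deriv coef0.
exact: (mulrn_pchar_reg charRp pm).
Qed.

Section WeylProduct.
Context {F : fieldType}.

Definition wterm (a b : {poly {poly F}}) (i j k : nat) : {poly {poly F}} :=
  ((a`_i * (b`_j)^`(k)) *+ 'C(i, k))%:P * 'X^(i - k + j).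

Lemma wmulE {a b : {poly {poly F}}} {n m : nat} :
  (size a <= n)%N -> (size b <= m)%N ->
  wmul a b = \sum_(i < n) \sum_(j < m) \sum_(k < i.+1) wterm a b i j k.
Proof.
move=> sa sb; rewrite /wmul -/(wterm a b).
rewrite (big_ord_widen _ (fun i => \sum_(j < size b) \sum_(k < i.+1) wterm a b i j k) sa).
rewrite big_mkcond /=; apply: eq_bigr => i _; case: ltnP => ia; last first.
  rewrite big1 // => j _; rewrite big1 // => k _.
  by rewrite /wterm (nth_default _ ia) mul0r mul0rn polyC0 mul0r.
rewrite (big_ord_widen _ (fun j => \sum_(k < i.+1) wterm a b i j k) sb) big_mkcond /=.
apply: eq_bigr => j _; case: ltnP => jb //; rewrite big1 // => k _.
by rewrite /wterm (nth_default _ jb) derivn_poly0 ?size_poly0 // mulr0 mul0rn polyC0 mul0r.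
Qed.

Lemma wmul_commutative_terms (a b : {poly {poly F}}) :
  (forall i j k, (0 < k)%N -> wterm a b i j k = 0) -> wmul a b = a * b.
Proof.
move=> wt0; rewrite (wmulE (leqnn _) (leqnn _)).
rewrite (mul_poly_expand (leqnn _) (leqnn _)).
apply: eq_bigr => i _; apply: eq_bigr => j _.
rewrite big_ord_recl big1 => [|k _]; last exact: wt0.
by rewrite /wterm subn0 derivn0 bin0 mulr1n addr0.
Qed.

Lemma wmul_polyCl (f : {poly F}) (b : {poly {poly F}}) : wmul f%:P b = f%:P * b.
Proof.
apply: wmul_commutative_terms => -[|i] j k k_gt0; rewrite /wterm coefC /=.
  by rewrite bin0n eqn0Ngt k_gt0 mulr0n polyC0 mul0r.
by rewrite mul0r mul0rn polyC0 mul0r.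
Qed.

(* z x = x z + dz/dy: commuting x past y^i produces i y^(i-1). *)
Lemma wmul_wxr (z : {poly {poly F}}) : wmul z (wx F) = z * wx F + z^`().
Proof.
rewrite (@wmulE z (wx F) (size z) 1 (leqnn _)) ?size_polyC_leq1 //.
have inner i : \sum_(j < 1) \sum_(k < i.+1) wterm z (wx F) i j k
   = (z`_i * 'X)%:P * 'X^i + (z`_i *+ i)%:P * 'X^(i.-1).
  case: i => [|i]; rewrite big_ord1.
    by rewrite big_ord1 /wterm /wx coefC /= bin0 mulr1n mulr0n polyC0 mul0r addr0.
  rewrite !big_ord_recl big1 ?addr0 => [|k _].
    by rewrite /wterm /wx coefC /= derivX bin0 bin1 mulr1n mulr1 subn0 !addn0 subSS subn0.
  rewrite /wterm /wx !lift0 coefC /= -!derivnS derivn_poly0 ?size_polyX //.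
  by rewrite mulr0 mul0rn polyC0 mul0r.
under eq_bigr => i _ do rewrite inner.
rewrite big_split /=; congr (_ + _).
  rewrite (mul_poly_expand (leqnn _) (size_polyC_leq1 _)); apply: eq_bigr => i _.
  by rewrite big_ord1 addn0 /wx coefC.
have sd : (size z^`() <= size z)%N.
  by case: (eqVneq z 0) => [->|/lt_size_deriv/ltnW //]; rewrite deriv0.
rewrite (poly_expand sd); case E: (size z) => [|s]; first by rewrite !big_ord0.
rewrite big_ord_recl big_ord_recr /= mulr0n polyC0 mul0r add0r coef_deriv.
rewrite (nth_default _ (_ : (size z <= s.+1)%N)) ?E // mul0rn polyC0 mul0r addr0.
by apply: eq_bigr => i _; rewrite coef_deriv.
Qed.

Lemma wyhatE (h : {poly F}) : wmul (wy F) (wpoly h) = h%:P * 'X + (h^`())%:P.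
Proof.
rewrite (@wmulE _ _ 2 1) ?size_polyX ?size_polyC_leq1 //.
rewrite !big_ord_recl !big_ord0 /= /wterm /wy /wpoly !coefX !coefC /=.
rewrite mul0r mul0rn polyC0 mul0r !addr0 add0r !mul1r /bump /=.
by rewrite bin0 binn !mulr1n expr0 mulr1 expr1.
Qed.

Lemma wmul_wyhatl (h : {poly F}) (z : {poly {poly F}}) :
  wmul (h%:P * 'X + (h^`())%:P) z =
  (h^`())%:P * z + h%:P * 'X * z + h%:P * \poly_(j < size z) ((z`_j)^`()).
Proof.
rewrite (@wmulE _ _ 2 (size z)) //; last first.
  by rewrite size_MXaddC; case: ifP => // _; rewrite ltnS size_polyC_leq1.
rewrite !big_ord_recl big_ord0 addr0 /=.
have c0 : (h%:P * 'X + (h^`())%:P)`_0 = h^`().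
  by rewrite coefD coefMX /= coefC /= add0r.
have c1 : (h%:P * 'X + (h^`())%:P)`_1 = h by rewrite coefD coefMX /= !coefC /= addr0.
have zE := @poly_expand _ z (size z) (leqnn _).
have -> : (h^`())%:P * z = \sum_(j < size z) (h^`() * z`_j)%:P * 'X^j.
  by rewrite {1}zE mulr_sumr; apply: eq_bigr => j _; rewrite polyCM mulrA.
have -> : h%:P * 'X * z = \sum_(j < size z) (h * z`_j)%:P * 'X^(1 + j).
  by rewrite {1}zE mulr_sumr; apply: eq_bigr => j _; rewrite polyCM exprD expr1; ring.
have -> : h%:P * \poly_(j < size z) ((z`_j)^`()) =
          \sum_(j < size z) (h * (z`_j)^`())%:P * 'X^j.
  by rewrite poly_def mulr_sumr; apply: eq_bigr => j _; rewrite -mul_polyC polyCM mulrA.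
rewrite -addrA -!big_split /=; apply: eq_bigr => j _.
rewrite big_ord1 !big_ord_recl big_ord0 addr0 /wterm /bump /= c0 c1.
by rewrite bin0 binn !mulr1n !subn0 subnn !add0n addn0.
Qed.
End WeylProduct.

Section WeylProductPchar.
Context {F : fieldType} {p : nat}.
Hypothesis charFp : p \in [pchar F].

Lemma pchar_polyF : p \in [pchar {poly F}].
Proof. by rewrite pchar_poly. Qed.

Lemma pchar_gt0 : (0 < p)%N.
Proof. exact/prime_gt0/(pcharf_prime charFp). Qed.

(* The k-th term of wmul with k > 0 carries C(i, k) g^(k), a multiple of
   i^_k, hence vanishes when p divides i. *)
Lemma derivn_bin_pchar (g : {poly F}) i k : (p %| i)%N -> (0 < k)%N ->
  g^`(k) *+ 'C(i, k) = 0.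
Proof.
move=> pi; case: k => // k _.
rewrite nderivn_def -mulrnA mulnC bin_ffact ffactnS.
by apply: (mulrn_pchar_dvd pchar_polyF); apply: dvdn_mulr.
Qed.

(* y^p is central in A_1: a p-sparse left factor multiplies commutatively. *)
Lemma wmul_sparsel (a b : {poly {poly F}}) : p_sparse p a -> wmul a b = a * b.
Proof.
move=> sa; apply: wmul_commutative_terms => i j k k_gt0.
rewrite /wterm -mulrnAr; case pi: (p %| i)%N.
  by rewrite derivn_bin_pchar // mulr0 polyC0 mul0r.
by rewrite sa ?pi // mul0r polyC0 mul0r.
Qed.

Lemma wmul_constr (a b : {poly {poly F}}) :
  (forall j, (b`_j)^`() = 0) -> wmul a b = a * b.
Proof.
move=> db; apply: wmul_commutative_terms => i j [//|k] _.
by rewrite /wterm derivSn db derivn_poly0 ?size_poly0 // mulr0 mul0rn polyC0 mul0r.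
Qed.

End WeylProductPchar.

(* Step 3a: A_h consists of the elements sum_m f_m y^m with h^m | f_m. *)
Section AdaptedElements.
Context {F : fieldType} (h : {poly F}).

Definition h_adapted (a : {poly {poly F}}) := forall m, h ^+ m %| a`_m.

Lemma h_adapted0 : h_adapted 0.
Proof. by move=> m; rewrite coef0 dvdp0. Qed.

Lemma h_adaptedD a b : h_adapted a -> h_adapted b -> h_adapted (a + b).
Proof. by move=> Ha Hb m; rewrite coefD dvdp_add. Qed.

Lemma h_adapted_sum (I : Type) (r : seq I) (P : pred I) (E : I -> {poly {poly F}}) :
  (forall i, P i -> h_adapted (E i)) -> h_adapted (\sum_(i <- r | P i) E i).
Proof. by move=> HE; apply: big_ind => //; [exact: h_adapted0 | exact: h_adaptedD]. Qed.

Lemma h_adapted_monom (c : {poly F}) n : h ^+ n %| c -> h_adapted (c%:P * 'X^n).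
Proof.
move=> Hc m; rewrite coefCM coefXn; case: eqP => [->|_]; first by rewrite mulr1.
by rewrite mulr0 dvdp0.
Qed.

Lemma dvdp_deriv_exp (g : {poly F}) n : h ^+ n %| g -> h ^+ n.-1 %| g^`().
Proof.
case/dvdpP => q ->; rewrite derivM deriv_exp; apply: dvdp_add.
  case: n => [|n]; first by rewrite expr0 dvd1p.
  by rewrite exprS mulrA dvdp_mull.
by rewrite mulrnAr -mulr_natr dvdp_mulr // mulrA dvdp_mull ?dvdpp.
Qed.

Lemma dvdp_derivn_exp (g : {poly F}) j k : h ^+ j %| g -> h ^+ (j - k) %| g^`(k).
Proof.
move=> Hg; elim: k => [|k IH]; first by rewrite subn0 derivn0.
by rewrite derivnS subnS; apply: dvdp_deriv_exp.
Qed.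

(* h-adapted elements are closed under the Weyl product: the term
   (f_i g_j^(k)) y^(i-k+j) is divisible by h^i h^(j-k) or by h^i. *)
Lemma h_adapted_wmul a b : h_adapted a -> h_adapted b -> h_adapted (wmul a b).
Proof.
move=> Ha Hb; rewrite (wmulE (leqnn _) (leqnn _)).
apply: h_adapted_sum => i _; apply: h_adapted_sum => j _.
apply: h_adapted_sum => k _; apply: h_adapted_monom.
rewrite -mulr_natr; apply: dvdp_mulr.
have ki : (k <= i)%N by rewrite -ltnS.
case: (leqP k j) => kj.
  have -> : (i - k + j = i + (j - k))%N by lia.
  by rewrite exprD dvdp_mul // dvdp_derivn_exp.
apply: dvdp_mulr; apply: (@dvdp_trans _ (h ^+ i)); last exact: Ha.
by apply: dvdp_exp2l; lia.
Qed.

Lemma h_adapted_of_Ah a : in_Ah h a -> h_adapted a.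
Proof.
elim=> [c| | |a1 b1 _ Ha _ Hb|a1 b1 _ Ha _ Hb].
- by move=> [|m]; rewrite coefC ?expr0 ?dvd1p //= dvdp0.
- by move=> [|m]; rewrite /wx coefC ?expr0 ?dvd1p //= dvdp0.
- rewrite wyhatE => m; rewrite coefD coefMX.
  case: m => [|[|m]] /=; rewrite ?expr0 ?dvd1p //.
    by rewrite !coefC /= addr0 expr1 dvdpp.
  by rewrite !coefC /= addr0 dvdp0.
- exact: h_adaptedD.
- exact: h_adapted_wmul.
Qed.

Lemma Ah0 : in_Ah h 0.
Proof. by have := Ah_scal h 0; rewrite !polyC0. Qed.

Lemma Ah_sum (I : Type) (r : seq I) (P : pred I) (E : I -> {poly {poly F}}) :
  (forall i, P i -> in_Ah h (E i)) -> in_Ah h (\sum_(i <- r | P i) E i).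
Proof. by move=> HE; apply: big_ind => //; [exact: Ah0 | exact: Ah_add]. Qed.

Lemma Ah_polyC (f : {poly F}) : in_Ah h f%:P.
Proof.
elim/poly_ind: f => [|f c IH]; first by rewrite polyC0; exact: Ah0.
rewrite polyCD; apply: Ah_add; last exact: Ah_scal.
by rewrite polyCM -wmul_polyCl; exact: Ah_mul IH (Ah_x h).
Qed.

(* h^m y^m lies in A_h: h^(m+1) y^(m+1) = yhat (h^m y^m) - (m+1) h' h^m y^m. *)
Lemma Ah_hpow_ypow m : in_Ah h ((h ^+ m)%:P * 'X^m).
Proof.
elim: m => [|m IH]; first by rewrite expr0 expr0 mulr1 -polyC1; exact: Ah_scal.
set E := (h ^+ m)%:P * 'X^m in IH *.
have dE : \poly_(j < size E) ((E`_j)^`()) = ((h ^+ m)^`())%:P * 'X^m.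
  apply/polyP => j; rewrite coef_poly coefCM coefXn.
  have -> : (h ^+ m)^`() * (j == m)%:R = ((h ^+ m) * (j == m)%:R)^`().
    by case: (j == m); rewrite ?mulr1 ?mulr0 ?deriv0.
  have -> : h ^+ m * (j == m)%:R = E`_j by rewrite /E coefCM coefXn.
  by case: ltnP => // /leq_sizeP -> //; rewrite deriv0.
have yhatE := wmul_wyhatl h E; rewrite dE in yhatE.
have -> : (h ^+ m.+1)%:P * 'X^(m.+1) =
  wmul (wmul (wy F) (wpoly h)) E + wmul ((- (h^`() + h^`() *+ m))%:P) E.
  rewrite wyhatE yhatE wmul_polyCl deriv_exp /E.
  case: m {IH E dE yhatE} => [|m].
    by rewrite !mulr0n addr0 expr0 expr1 !polyC1; ring.
  by rewrite !exprS !polyCM polyCN polyCD !polyCMn; ring.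
exact: Ah_add (Ah_mul (Ah_yhat h) IH) (Ah_mul (Ah_polyC _) IH).
Qed.

Lemma Ah_of_h_adapted a : h_adapted a -> in_Ah h a.
Proof.
move=> Ha; rewrite (poly_expand (leqnn (size a))); apply: Ah_sum => i _.
have /divpK <- := Ha i.
by rewrite polyCM -mulrA -wmul_polyCl; exact: Ah_mul (Ah_polyC _) (Ah_hpow_ypow i).
Qed.

End AdaptedElements.

Section Center.
Variables (F : fieldType) (p : nat) (h : {poly F}).
Hypotheses (charFp : p \in [pchar F]) (h_neq0 : h != 0).

Definition central_form (z : {poly {poly F}}) :=
  p_sparse p z /\ (forall i, (z`_i)^`() = 0).

(* A central element commutes with x, so dz/dy = 0 and z is p-sparse in y;
   it commutes with yhat, so h dz/dx = 0 and its coefficients are constant. *)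
Lemma central_form_of_center z : in_center h z -> central_form z.
Proof.
case=> _ zC.
have dz : z^`() = 0.
  apply: (addrI (z * wx F)); rewrite addr0 -wmul_wxr (zC _ (Ah_x h)).
  by rewrite /wx wmul_polyCl mulrC.
have sz : p_sparse p z := deriv0_sparse (pchar_polyF charFp) dz.
split=> // i.
have := zC _ (Ah_yhat h); rewrite wyhatE wmul_wyhatl (wmul_sparsel charFp) // => zyhat.
have /eqP : h%:P * \poly_(j < size z) ((z`_j)^`()) = 0.
  by apply: (addrI ((h^`())%:P * z + h%:P * 'X * z)); rewrite addr0 -zyhat; ring.
rewrite mulf_eq0 polyC_eq0 (negbTE h_neq0) /= => /eqP dzx.
have := congr1 (fun r : {poly {poly F}} => r`_i) dzx.
by rewrite coef_poly coef0; case: ltnP => // /leq_sizeP -> //; rewrite deriv0.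
Qed.

Lemma center_of_central_form z :
  h_adapted h z -> central_form z -> in_center h z.
Proof.
move=> Sz [sz dz]; split; first exact: Ah_of_h_adapted.
by move=> a _; rewrite (wmul_sparsel charFp) // wmul_constr // mulrC.
Qed.

Lemma center_iff z : in_center h z <-> h_adapted h z /\ central_form z.
Proof.
split=> [zC|[]]; last exact: center_of_central_form.
by split; [exact/h_adapted_of_Ah/(proj1 zC) | exact: central_form_of_center].
Qed.

Lemma central_formD a b : central_form a -> central_form b -> central_form (a + b).
Proof.
move=> [sa da] [sb db]; split=> [m pm|i]; first by rewrite coefD sa ?sb ?addr0.
by rewrite coefD derivD da db addr0.
Qed.

Lemma central_form_wmul a b :
  central_form a -> central_form b -> central_form (wmul a b).
Proof.
move=> [sa da] [sb db]; rewrite (wmul_sparsel charFp) //; split=> [m pm|i].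
  rewrite coefM big1 // => j _; case pj: (p %| j)%N; last by rewrite sa ?pj ?mul0r.
  rewrite sb ?mulr0 //; apply/negP => pmj; move/negP: pm; apply.
  have jm : (j <= m)%N by rewrite -ltnS.
  by rewrite -(subnKC jm) dvdn_add.
rewrite coefM; apply: (big_ind (fun q : {poly F} => q^`() = 0)) => [|x y dx dy|j _].
- exact: deriv0.
- by rewrite derivD dx dy addr0.
- by rewrite derivM da db mul0r mulr0 addr0.
Qed.

Lemma central_form_polyC (f : {poly F}) : f^`() = 0 -> central_form f%:P.
Proof.
move=> df; split=> [m pm|i]; rewrite coefC; case: eqP => // m0.
  by rewrite m0 dvdn0 in pm.
exact: deriv0.
Qed.

Lemma central_form_hpow_ypow : central_form ((h ^+ p)%:P * 'X^p).
Proof.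
split=> [m pm|i]; rewrite coefCM coefXn.
  by case: eqP => [e|_]; [rewrite e dvdnn in pm | rewrite mulr0].
case: eqP => _; rewrite ?mulr1 ?mulr0 ?deriv0 //.
by rewrite deriv_exp (mulrn_pchar_dvd (pchar_polyF charFp)).
Qed.

Lemma Zgen_central_form z : in_Zgen h p z -> h_adapted h z /\ central_form z.
Proof.
elim=> [c| | |a b _ [Sa ca] _ [Sb cb]|a b _ [Sa ca] _ [Sb cb]].
- split; first exact/h_adapted_of_Ah/Ah_polyC.
  by apply: central_form_polyC; rewrite derivC.
- split; first exact/h_adapted_of_Ah/Ah_polyC.
  by apply: central_form_polyC; rewrite derivXn (mulrn_pchar_dvd (pchar_polyF charFp)).
- by split; [apply: h_adapted_monom; rewrite dvdpp | exact: central_form_hpow_ypow].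
- by split; [exact: h_adaptedD | exact: central_formD].
- by split; [exact: h_adapted_wmul | exact: central_form_wmul].
Qed.

Lemma Zgen0 : in_Zgen h p 0.
Proof. by have := Zg_scal h p 0; rewrite !polyC0. Qed.

Lemma Zgen_sum (I : Type) (r : seq I) (P : pred I) (E : I -> {poly {poly F}}) :
  (forall i, P i -> in_Zgen h p (E i)) -> in_Zgen h p (\sum_(i <- r | P i) E i).
Proof. by move=> HE; apply: big_ind => //; [exact: Zgen0 | exact: Zg_add]. Qed.

Lemma Zgen_xpow k : in_Zgen h p ('X^(p * k))%:P.
Proof.
elim: k => [|k IH]; first by rewrite muln0 expr0 -polyC1; exact: Zg_scal.
by rewrite mulnS exprD polyCM -wmul_polyCl; exact: Zg_mul (Zg_xp h p) IH.
Qed.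

Lemma Zgen_polyC (q : {poly F}) : p_sparse p q -> in_Zgen h p q%:P.
Proof.
move=> sq; rewrite (poly_expand (leqnn (size q))) rmorph_sum /=.
apply: Zgen_sum => i _; case pi: (p %| i)%N; last first.
  by rewrite (sq i) ?pi // polyC0 mul0r polyC0; exact: Zgen0.
rewrite polyCM -wmul_polyCl -(divnK pi) mulnC.
exact: Zg_mul (Zg_scal _ _ _) (Zgen_xpow _).
Qed.

Lemma Zgen_ypow k : in_Zgen h p (((h ^+ p)%:P * 'X^p) ^+ k).
Proof.
elim: k => [|k IH]; first by rewrite expr0 -polyC1 -polyC1; exact: Zg_scal.
rewrite exprS -(wmul_sparsel charFp); first exact: Zg_mul (Zg_hyp h p) IH.
by case: central_form_hpow_ypow.
Qed.

(* An h-adapted central form is a sum of terms q_m(x^p) (h^p y^p)^(m/p). *)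
Lemma Zgen_of_central_form z : h_adapted h z -> central_form z -> in_Zgen h p z.
Proof.
move=> Sz [sz dz]; rewrite (poly_expand (leqnn (size z))).
apply: Zgen_sum => m _; case pm: (p %| m)%N; last first.
  by rewrite sz ?pm // polyC0 mul0r; exact: Zgen0.
have /divpK qE := Sz m; set q := z`_m %/ h ^+ m in qE.
have dq : q^`() = 0.
  have := dz m; rewrite -qE derivM deriv_exp (mulrn_pchar_dvd (pchar_polyF charFp)) //.
  rewrite mulr0 addr0 => /eqP.
  by rewrite mulf_eq0 (negbTE (expf_neq0 _ h_neq0)) orbF => /eqP.
rewrite -qE polyCM -mulrA -(divnK pm) mulnC !exprM polyC_exp -exprMn.
rewrite -wmul_polyCl; apply: Zg_mul (Zgen_ypow _).
exact/Zgen_polyC/(deriv0_sparse charFp).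
Qed.

Lemma center_Zgen z : in_center h z <-> in_Zgen h p z.
Proof.
rewrite center_iff; split; first by case; exact: Zgen_of_central_form.
exact: Zgen_central_form.
Qed.
End Center.
Arguments central_form {F} p z.
Arguments center_iff {F p h} charFp h_neq0 z.
Arguments central_form_of_center {F p h} charFp h_neq0 {z}.

Section Basis.
Context {F : fieldType} (p : nat) (h : {poly F}).
Hypotheses (charFp : p \in [pchar F]) (h_neq0 : h != 0).

Let p_gt0 : (0 < p)%N := pchar_gt0 charFp.

Lemma wbasis_Ah i j : in_Ah h (wbasis h i j).
Proof. by apply: Ah_of_h_adapted; apply: h_adapted_monom; rewrite dvdp_mull. Qed.

Lemma deriv_psection i (q : {poly F}) : (psection p i q)^`() = 0.
Proof.
apply/polyP => k; rewrite coef_deriv coef0.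
case pk: (p %| k.+1)%N; first exact: (mulrn_pchar_dvd charFp).
by rewrite psection_sparse ?pk // mul0rn.
Qed.

Lemma basis_combinationE (c : 'I_p -> 'I_p -> {poly {poly F}}) :
  (forall i j, p_sparse p (c i j)) ->
  \sum_(i < p) \sum_(j < p) wmul (c i j) (wbasis h i j) =
  \sum_(j < p) 'X^j * \sum_(i < p) c i j * ('X^i * h ^+ j)%:P.
Proof.
move=> sc; rewrite exchange_big /=; apply: eq_bigr => j _; rewrite mulr_sumr.
apply: eq_bigr => i _; rewrite (wmul_sparsel charFp) //.
by rewrite /wbasis /wpoly; ring.
Qed.

Lemma combination_sparse {c : 'I_p -> 'I_p -> {poly {poly F}}} :
  (forall i j, p_sparse p (c i j)) ->
  forall j : 'I_p, p_sparse p (\sum_(i < p) c i j * ('X^i * h ^+ j)%:P).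
Proof.
move=> sc j m pm; rewrite coef_sum big1 // => i _.
by rewrite coefMC sc // mul0r.
Qed.

(* The coordinates of a along the basis: the coefficient of y^(M+j), with
   p | M, is f_(M+j) = h^(M+j) sum_i x^i q_i with q_i in F[x^p], and the
   coordinate (i, j) collects the central terms q_i h^M y^M. *)
Definition coordinate (a : {poly {poly F}}) (i j : 'I_p) : {poly {poly F}} :=
  \poly_(m < size a) (if (p %| m)%N
     then psection p i (a`_(m + j) %/ h ^+ (m + j)) * h ^+ m else 0).

Lemma coordinate_center a i j : in_center h (coordinate a i j).
Proof.
apply/(center_iff charFp h_neq0); split.
  move=> m; rewrite coef_poly; case: ifP => _; last exact: dvdp0.
  by case: ifP => _; [exact: dvdp_mull | exact: dvdp0].
split=> [m pm|k]; first by rewrite coef_poly (negbTE pm); case: ifP.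
rewrite coef_poly; case: ifP => _; last exact: deriv0.
case: ifP => pk; last exact: deriv0.
rewrite derivM deriv_psection mul0r add0r deriv_exp.
by rewrite (mulrn_pchar_dvd (pchar_polyF charFp)) // mulr0.
Qed.

Lemma coordinate_sparse a i j : p_sparse p (coordinate a i j).
Proof. by move=> m pm; rewrite coef_poly (negbTE pm); case: ifP. Qed.

Lemma coordinate_decomposition a : h_adapted h a ->
  a = \sum_(i < p) \sum_(j < p) wmul (coordinate a i j) (wbasis h i j).
Proof.
move=> Sa; rewrite basis_combinationE; last exact: coordinate_sparse.
apply/polyP => n; rewrite (coef_psplit p_gt0); last first.
  by apply: combination_sparse => i j; exact: coordinate_sparse.
set M := (n %/ p * p)%N; have nE : (M + n %% p)%N = n by rewrite /M -divn_eq.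
rewrite coef_sum; under eq_bigr => i _ do rewrite coefMC coef_poly /= nE dvdn_mull //.
case: ltnP => Ma; last first.
  rewrite big1 => [|i _]; last by rewrite mul0r.
  by rewrite nth_default // (leq_trans Ma) // leq_divM.
set qn := a`_n %/ h ^+ n.
rewrite -(divpK (Sa n)) -/qn {1}(psplit p_gt0 qn) mulr_suml.
by apply: eq_bigr => i _; rewrite -{1}nE exprD; ring.
Qed.

(* Uniqueness: split first along y^j (j < p), then along x^i (i < p). *)
Lemma basis_independent (c : 'I_p -> 'I_p -> {poly {poly F}}) :
  (forall i j, in_center h (c i j)) ->
  \sum_(i < p) \sum_(j < p) wmul (c i j) (wbasis h i j) = 0 ->
  forall i j, c i j = 0.
Proof.
move=> cC; have cf i j := central_form_of_center charFp h_neq0 (cC i j).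
have sc i j : p_sparse p (c i j) by case: (cf i j).
rewrite basis_combinationE // => c0.
have cj0 := psplit_uniq p_gt0 _ (combination_sparse sc) c0.
move=> i j; apply/polyP => m; rewrite coef0.
have := congr1 (fun r : {poly {poly F}} => r`_m) (cj0 j).
rewrite coef_sum coef0; under eq_bigr => k _ do rewrite coefMC.
have -> : \sum_(k < p) (c k j)`_m * ('X^k * h ^+ j) =
          (\sum_(k < p) 'X^k * (c k j)`_m) * h ^+ j.
  by rewrite mulr_suml; apply: eq_bigr => k _; ring.
move/eqP; rewrite mulf_eq0 (negbTE (expf_neq0 _ h_neq0)) orbF => /eqP cm0.
apply: (psplit_uniq p_gt0 (fun k => (c k j)`_m)) => // k.
by apply: (deriv0_sparse charFp); case: (cf k j).
Qed.
End Basis.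

Theorem proposition5p5 (F : fieldType) (p : nat) (charFp : p \in [pchar F])
    (h : {poly F}) (h_neq0 : h != 0) :
  (* Z(A_h) = F[x^p, h^p y^p] *)
  (forall z : {poly {poly F}}, in_center h z <-> in_Zgen h p z) /\
  (* the basis elements lie in A_h *)
  (forall i j : 'I_p, in_Ah h (wbasis h i j)) /\
  (* they span A_h over Z(A_h) *)
  (forall a, in_Ah h a ->
     exists c : 'I_p -> 'I_p -> {poly {poly F}},
       (forall i j, in_center h (c i j)) /\
       a = \sum_(i < p) \sum_(j < p) wmul (c i j) (wbasis h i j)) /\
  (* and are linearly independent over Z(A_h) *)
  (forall c : 'I_p -> 'I_p -> {poly {poly F}},
     (forall i j, in_center h (c i j)) ->
     \sum_(i < p) \sum_(j < p) wmul (c i j) (wbasis h i j) = 0 ->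
     forall i j, c i j = 0).
Proof.
split; first exact: center_Zgen.
split=> [i j|]; first exact: wbasis_Ah.
split; last exact: basis_independent.
move=> a /h_adapted_of_Ah Sa; exists (coordinate p h a); split.
  exact: coordinate_center.
exact: coordinate_decomposition.
Qed.
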